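(* The function $$u(z)=-8\frac{(1-|z|^2)^4}{|1-z|^2}+\frac{3}{2}\frac{(1-|z|^2)^4}{|1-z|^4}-6\frac{(1-|z|^2)^5}{|1-z|^4}-3\frac{(1-|z|^2)^5}{|1-z|^6}+\frac{(1-|z|^2)^7}{|1-z|^8},\quad z\in\mathbb{D},$$ is $w_2$-biharmonic in $\mathbb{D}$, i.e. $\Delta\big((1-|z|^2)^{-2}\Delta u\big)=0$ in $\mathbb{D}$.
   Context: $\mathbb{D}$ is the open unit disc and $\Delta=\partial^2/\partial z\partial\bar z$. The weight is $w_2(z)=(1-|z|^2)^2$, and $u$ is called $w_2$-biharmonic if $\Delta w_2^{-1}\Delta u=0$ in $\mathbb{D}$. *)

From Stdlib Require Import Reals.
From Coquelicot Require Import Coquelicot.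
Open Scope R_scope.

(* A point z = x + i y of the plane is represented by its real coordinates. *)
Definition unit_disc (x y : R) : Prop := x ^ 2 + y ^ 2 < 1.

Definition partial_x (f : R -> R -> R) (x y : R) : R := Derive (fun t => f t y) x.
Definition partial_y (f : R -> R -> R) (x y : R) : R := Derive (fun t => f x t) y.

(* Delta = d^2/(dz dzbar) = (1/4)(d^2/dx^2 + d^2/dy^2). *)
Definition Delta (f : R -> R -> R) (x y : R) : R :=
  / 4 * (partial_x (partial_x f) x y + partial_y (partial_y f) x y).

(* f has (first and) second pure partial derivatives at (x,y), so that
   Delta f x y is a genuine value and not a default of the total Derive. *)
Definition twice_partially_differentiable (f : R -> R -> R) (x y : R) : Prop :=
  ex_derive (fun t => f t y) x /\ ex_derive (fun t => partial_x f t y) x /\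
  ex_derive (fun t => f x t) y /\ ex_derive (fun t => partial_y f x t) y.

Definition w2 (x y : R) : R := (1 - (x ^ 2 + y ^ 2)) ^ 2.

Definition u_prop (x y : R) : R :=
  let s := 1 - (x ^ 2 + y ^ 2) in
  let d := (1 - x) ^ 2 + y ^ 2 in
  - 8 * s ^ 4 / d + 3 / 2 * s ^ 4 / d ^ 2 - 6 * s ^ 5 / d ^ 2
  - 3 * s ^ 5 / d ^ 3 + s ^ 7 / d ^ 4.

Definition w2_biharmonic (u : R -> R -> R) : Prop :=
  forall x y, unit_disc x y ->
    twice_partially_differentiable u x y /\
    twice_partially_differentiable (fun a b => / w2 a b * Delta u a b) x y /\
    Delta (fun a b => / w2 a b * Delta u a b) x y = 0.

(* Write s = 1 - |z|^2 and d = |1 - z|^2, so that u is a rational function of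
   x, y that is smooth away from z = 1.  Its Laplacian is divisible by the weight:
   w_2^{-1} Delta u = v, where v (below) is a rational function of s and d alone,
   and v is harmonic in the plane minus {1}.  The explicit partial derivatives
   of u and v below come from computer algebra and are checked by [auto_derive]
   and [field]. *)

From Stdlib Require Import Reals Lra.
From Coquelicot Require Import Coquelicot.
Open Scope R_scope.

Lemma is_derive_ext_open (U : R -> Prop) (f g g' : R -> R) :
  open U -> (forall t, U t -> f t = g t) ->
  (forall t, U t -> is_derive g t (g' t)) ->
  forall t, U t -> is_derive f t (g' t).
Proof.
  intros HU Hfg Hg t Ht.
  apply (is_derive_ext_loc g); [|exact (Hg t Ht)].
  apply (filter_imp U); [|exact (HU t Ht)].
  intros r Hr; symmetry; exact (Hfg r Hr).
Qed.

Lemma Derive2_ext_open (U : R -> Prop) (f g g1 g2 : R -> R) x :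
  open U -> U x -> (forall t, U t -> f t = g t) ->
  (forall t, U t -> is_derive g t (g1 t)) ->
  (forall t, U t -> is_derive g1 t (g2 t)) ->
  ex_derive f x /\ ex_derive (fun t => Derive f t) x /\
  Derive (fun t => Derive f t) x = g2 x.
Proof.
  intros HU Hx Hfg Hg Hg1.
  assert (Hf := is_derive_ext_open U f g g1 HU Hfg Hg).
  assert (Hf1 : forall t, U t -> is_derive (fun r => Derive f r) t (g2 t)).
  { apply (is_derive_ext_open U _ g1); [exact HU | | exact Hg1].
    intros t Ht; exact (is_derive_unique _ _ _ (Hf t Ht)). }
  split; [|split]; [exists (g1 x) | exists (g2 x) | apply is_derive_unique]; auto.
Qed.

Section LaplacianOnOpenSet.

Variable D : R -> R -> Prop.
Hypothesis D_open_x : forall y, open (fun x => D x y).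
Hypothesis D_open_y : forall x, open (fun y => D x y).

Variables f g g_x g_xx g_y g_yy : R -> R -> R.
Hypothesis f_eq_g : forall x y, D x y -> f x y = g x y.
Hypothesis g_x_spec : forall x y, D x y -> is_derive (fun t => g t y) x (g_x x y).
Hypothesis g_xx_spec :
  forall x y, D x y -> is_derive (fun t => g_x t y) x (g_xx x y).
Hypothesis g_y_spec : forall x y, D x y -> is_derive (fun t => g x t) y (g_y x y).
Hypothesis g_yy_spec :
  forall x y, D x y -> is_derive (fun t => g_y x t) y (g_yy x y).

Lemma Delta_on_open x y : D x y ->
  twice_partially_differentiable f x y /\
  Delta f x y = / 4 * (g_xx x y + g_yy x y).
Proof.
  intros Hxy.
  destruct (Derive2_ext_open (fun t => D t y) (fun t => f t y) (fun t => g t y)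
    (fun t => g_x t y) (fun t => g_xx t y) x (D_open_x y) Hxy
    (fun t => f_eq_g t y) (fun t => g_x_spec t y) (fun t => g_xx_spec t y))
    as [Hx [Hxx Exx]].
  destruct (Derive2_ext_open (fun t => D x t) (fun t => f x t) (fun t => g x t)
    (fun t => g_y x t) (fun t => g_yy x t) y (D_open_y x) Hxy
    (fun t => f_eq_g x t) (fun t => g_y_spec x t) (fun t => g_yy_spec x t))
    as [Hy [Hyy Eyy]].
  split; [repeat split; assumption |].
  unfold Delta, partial_x, partial_y; rewrite Exx, Eyy; reflexivity.
Qed.

End LaplacianOnOpenSet.

Lemma open_unit_disc_x y : open (fun x => unit_disc x y).
Proof.
  apply (open_comp (fun x => x ^ 2 + y ^ 2) (fun r => r < 1)); [|apply open_lt].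
  intros x _.
  apply (@ex_derive_continuous R_AbsRing R_NormedModule (fun t => t ^ 2 + y ^ 2)).
  auto_derive; exact I.
Qed.

Lemma open_unit_disc_y x : open (fun y => unit_disc x y).
Proof.
  apply (open_comp (fun y => x ^ 2 + y ^ 2) (fun r => r < 1)); [|apply open_lt].
  intros y _.
  apply (@ex_derive_continuous R_AbsRing R_NormedModule (fun t => x ^ 2 + t ^ 2)).
  auto_derive; exact I.
Qed.

Lemma unit_disc_dist1_neq0 x y : unit_disc x y -> (1 - x) ^ 2 + y ^ 2 <> 0.
Proof. unfold unit_disc; intros H E; nra. Qed.

Lemma unit_disc_weight_neq0 x y : unit_disc x y -> 1 - (x ^ 2 + y ^ 2) <> 0.
Proof. unfold unit_disc; lra. Qed.

(* Side goals are products of powers of [d] (or [s]); each factor equals the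
   quantity [Hd] says is nonzero, up to [ring]. *)
Ltac nonzero_from Hd :=
  repeat split;
  repeat (apply Rmult_integral_contrapositive_currified || apply pow_nonzero);
  try lra;
  try (let E := fresh in intro E; apply Hd; rewrite <- E; ring).

Ltac certify_derivative :=
  let Hd := fresh in
  intro Hd; cbv zeta; auto_derive; [nonzero_from Hd | field; nonzero_from Hd].

Definition u_x (x y : R) : R :=
  let s := 1 - (x^2 + y^2) in let d := (1 - x)^2 + y^2 in
  - 12 * x * s^3 / d^2 + 64 * x * s^3 / d + (6 + 24 * x) * s^4 / d^3
  + (- 16 + 76 * x) * s^4 / d^2 + (- 18 + 18 * x) * s^5 / d^4
  + (- 24 + 24 * x) * s^5 / d^3 - 14 * x * s^6 / d^4
  + (8 - 8 * x) * s^7 / d^5.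

Definition u_xx (x y : R) : R :=
  let s := 1 - (x^2 + y^2) in let d := (1 - x)^2 + y^2 in
  72 * x^2 * s^2 / d^2 - 384 * x^2 * s^2 / d
  + (- 96 * x - 144 * x^2) * s^3 / d^3
  + (- 12 + 256 * x - 736 * x^2) * s^3 / d^2 + 64 * s^3 / d
  + (36 + 288 * x - 324 * x^2) * s^4 / d^4
  + (- 40 + 608 * x - 544 * x^2) * s^4 / d^3 + 76 * s^4 / d^2
  + (- 144 + 288 * x - 144 * x^2) * s^5 / d^5
  + (- 126 + 288 * x + 24 * x^2) * s^5 / d^4 + 24 * s^5 / d^3
  + (- 224 * x + 224 * x^2) * s^6 / d^5 - 14 * s^6 / d^4
  + (80 - 160 * x + 80 * x^2) * s^7 / d^6 - 8 * s^7 / d^5.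

Definition u_y (x y : R) : R :=
  let s := 1 - (x^2 + y^2) in let d := (1 - x)^2 + y^2 in
  - 12 * y * s^3 / d^2 + 64 * y * s^3 / d + 24 * y * s^4 / d^3
  + 76 * y * s^4 / d^2 + 18 * y * s^5 / d^4 + 24 * y * s^5 / d^3
  - 14 * y * s^6 / d^4 - 8 * y * s^7 / d^5.

Definition u_yy (x y : R) : R :=
  let s := 1 - (x^2 + y^2) in let d := (1 - x)^2 + y^2 in
  72 * y^2 * s^2 / d^2 - 384 * y^2 * s^2 / d - 144 * y^2 * s^3 / d^3
  + (- 12 - 736 * y^2) * s^3 / d^2 + 64 * s^3 / d - 324 * y^2 * s^4 / d^4
  + (24 - 544 * y^2) * s^4 / d^3 + 76 * s^4 / d^2 - 144 * y^2 * s^5 / d^5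
  + (18 + 24 * y^2) * s^5 / d^4 + 24 * s^5 / d^3 + 224 * y^2 * s^6 / d^5
  - 14 * s^6 / d^4 + 80 * y^2 * s^7 / d^6 - 8 * s^7 / d^5.

Lemma is_derive_u_x x y : (1 - x) ^ 2 + y ^ 2 <> 0 ->
  is_derive (fun t => u_prop t y) x (u_x x y).
Proof. unfold u_prop, u_x; certify_derivative. Qed.

Lemma is_derive_u_xx x y : (1 - x) ^ 2 + y ^ 2 <> 0 ->
  is_derive (fun t => u_x t y) x (u_xx x y).
Proof. unfold u_x, u_xx; certify_derivative. Qed.

Lemma is_derive_u_y x y : (1 - x) ^ 2 + y ^ 2 <> 0 ->
  is_derive (fun t => u_prop x t) y (u_y x y).
Proof. unfold u_prop, u_y; certify_derivative. Qed.

Lemma is_derive_u_yy x y : (1 - x) ^ 2 + y ^ 2 <> 0 ->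
  is_derive (fun t => u_y x t) y (u_yy x y).
Proof. unfold u_y, u_yy; certify_derivative. Qed.

Definition v (x y : R) : R :=
  let s := 1 - (x^2 + y^2) in let d := (1 - x)^2 + y^2 in
  18 / d^2 - 96 / d - 60 * s / d^3 - 132 * s / d^2 + 96 * s / d
  + 24 * s^2 / d^3 + 114 * s^2 / d^2 + 60 * s^3 / d^4 + 36 * s^3 / d^3
  - 21 * s^4 / d^4 - 12 * s^5 / d^5.

Definition v_x (x y : R) : R :=
  let s := 1 - (x^2 + y^2) in let d := (1 - x)^2 + y^2 in
  (72 + 48 * x) / d^3 + (- 192 + 456 * x) / d^2 - 192 * x / d
  + (- 360 + 360 * x) * s / d^4 + (- 528 + 432 * x) * s / d^3
  + (192 - 648 * x) * s / d^2 + (144 - 504 * x) * s^2 / d^4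
  + (456 - 672 * x) * s^2 / d^3 + (480 - 480 * x) * s^3 / d^5
  + (216 - 48 * x) * s^3 / d^4 + (- 168 + 288 * x) * s^4 / d^5
  + (- 120 + 120 * x) * s^5 / d^6.

Definition v_xx (x y : R) : R :=
  let s := 1 - (x^2 + y^2) in let d := (1 - x)^2 + y^2 in
  (432 + 576 * x - 1008 * x^2) / d^4 + (- 720 + 3648 * x - 2688 * x^2) / d^3
  + (456 - 768 * x + 1680 * x^2) / d^2 - 192 / d
  + (- 2880 + 5760 * x - 2880 * x^2) * s / d^5
  + (- 2808 + 5184 * x - 576 * x^2) * s / d^4
  + (1200 - 5184 * x + 5280 * x^2) * s / d^3 - 648 * s / d^2
  + (1152 - 8064 * x + 6912 * x^2) * s^2 / d^5
  + (2232 - 8064 * x + 4320 * x^2) * s^2 / d^4 - 672 * s^2 / d^3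
  + (4800 - 9600 * x + 4800 * x^2) * s^3 / d^6
  + (1248 - 768 * x - 1920 * x^2) * s^3 / d^5 - 48 * s^3 / d^4
  + (- 1680 + 5760 * x - 4080 * x^2) * s^4 / d^6 + 288 * s^4 / d^5
  + (- 1440 + 2880 * x - 1440 * x^2) * s^5 / d^7 + 120 * s^5 / d^6.

Definition v_y (x y : R) : R :=
  let s := 1 - (x^2 + y^2) in let d := (1 - x)^2 + y^2 in
  48 * y / d^3 + 456 * y / d^2 - 192 * y / d + 360 * y * s / d^4
  + 432 * y * s / d^3 - 648 * y * s / d^2 - 504 * y * s^2 / d^4
  - 672 * y * s^2 / d^3 - 480 * y * s^3 / d^5 - 48 * y * s^3 / d^4
  + 288 * y * s^4 / d^5 + 120 * y * s^5 / d^6.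

Definition v_yy (x y : R) : R :=
  let s := 1 - (x^2 + y^2) in let d := (1 - x)^2 + y^2 in
  - 1008 * y^2 / d^4 + (48 - 2688 * y^2) / d^3 + (456 + 1680 * y^2) / d^2
  - 192 / d - 2880 * y^2 * s / d^5 + (360 - 576 * y^2) * s / d^4
  + (432 + 5280 * y^2) * s / d^3 - 648 * s / d^2 + 6912 * y^2 * s^2 / d^5
  + (- 504 + 4320 * y^2) * s^2 / d^4 - 672 * s^2 / d^3
  + 4800 * y^2 * s^3 / d^6 + (- 480 - 1920 * y^2) * s^3 / d^5
  - 48 * s^3 / d^4 - 4080 * y^2 * s^4 / d^6 + 288 * s^4 / d^5
  - 1440 * y^2 * s^5 / d^7 + 120 * s^5 / d^6.

Lemma is_derive_v_x x y : (1 - x) ^ 2 + y ^ 2 <> 0 ->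
  is_derive (fun t => v t y) x (v_x x y).
Proof. unfold v, v_x; certify_derivative. Qed.

Lemma is_derive_v_xx x y : (1 - x) ^ 2 + y ^ 2 <> 0 ->
  is_derive (fun t => v_x t y) x (v_xx x y).
Proof. unfold v_x, v_xx; certify_derivative. Qed.

Lemma is_derive_v_y x y : (1 - x) ^ 2 + y ^ 2 <> 0 ->
  is_derive (fun t => v x t) y (v_y x y).
Proof. unfold v, v_y; certify_derivative. Qed.

Lemma is_derive_v_yy x y : (1 - x) ^ 2 + y ^ 2 <> 0 ->
  is_derive (fun t => v_y x t) y (v_yy x y).
Proof. unfold v_y, v_yy; certify_derivative. Qed.

Lemma weighted_Laplacian_u x y :
  (1 - x) ^ 2 + y ^ 2 <> 0 -> 1 - (x ^ 2 + y ^ 2) <> 0 ->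
  / w2 x y * (/ 4 * (u_xx x y + u_yy x y)) = v x y.
Proof.
  unfold w2, u_xx, u_yy, v; cbv zeta; intros Hd Hs.
  field; nonzero_from Hd; nonzero_from Hs.
Qed.

Lemma v_harmonic x y : (1 - x) ^ 2 + y ^ 2 <> 0 -> v_xx x y + v_yy x y = 0.
Proof. unfold v_xx, v_yy; cbv zeta; intros Hd; field; nonzero_from Hd. Qed.

Theorem proposition3p2 : w2_biharmonic u_prop.
Proof.
  assert (Hu : forall x y, unit_disc x y ->
    twice_partially_differentiable u_prop x y /\
    Delta u_prop x y = / 4 * (u_xx x y + u_yy x y)).
  { apply (Delta_on_open unit_disc open_unit_disc_x open_unit_disc_y
      u_prop u_prop u_x u_xx u_y u_yy);
      auto using unit_disc_dist1_neq0,
        is_derive_u_x, is_derive_u_xx, is_derive_u_y, is_derive_u_yy. }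
  assert (Hv : forall x y, unit_disc x y ->
    twice_partially_differentiable (fun a b => / w2 a b * Delta u_prop a b) x y /\
    Delta (fun a b => / w2 a b * Delta u_prop a b) x y =
      / 4 * (v_xx x y + v_yy x y)).
  { apply (Delta_on_open unit_disc open_unit_disc_x open_unit_disc_y
      _ v v_x v_xx v_y v_yy);
      auto using unit_disc_dist1_neq0,
        is_derive_v_x, is_derive_v_xx, is_derive_v_y, is_derive_v_yy.
    intros x y Hxy; rewrite (proj2 (Hu x y Hxy)).
    apply weighted_Laplacian_u;
      [apply unit_disc_dist1_neq0 | apply unit_disc_weight_neq0]; exact Hxy. }
  intros x y Hxy; split; [|split]; [apply Hu, Hxy | apply Hv, Hxy |].
  rewrite (proj2 (Hv x y Hxy)), v_harmonic; [ring |].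
  exact (unit_disc_dist1_neq0 x y Hxy).
Qed.
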